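(* For a cograph $\mathcal{C}$ the following are equivalent: (1) $\mathcal{C}$ is a PL-cograph; (2) for every edge value $e$ and every two distinct pairs $\{P,Q\}\neq\{R,S\}$ with $\mathcal{C}(P,Q)=\mathcal{C}(R,S)=e$, every pair of distinct points of the (3- or 4-element) set $\{P,Q,R,S\}$ has edge value $e$; (3) every block of $\mathcal{C}$ is a complete graph; (4) any two distinct blocks of $\mathcal{C}$ have at most one vertex in common.
   Context: A cograph is a function $\mathcal{C}$ assigning to each unordered pair $\{P,Q\}$ of distinct elements of a point set a value $\mathcal{C}(P,Q)$ (an edge). A PL-cograph is a cograph satisfying: (1a) for distinct points $P,Q,R$, if $\mathcal{C}(P,Q)=\mathcal{C}(Q,R)$ then $\mathcal{C}(P,Q)=\mathcal{C}(P,R)$; (1b) for distinct points $P,Q,R,S$, if $\mathcal{C}(P,Q)=\mathcal{C}(R,S)$ then $\mathcal{C}(P,Q)=\mathcal{C}(P,R)=\mathcal{C}(P,S)=\mathcal{C}(Q,R)=\mathcal{C}(Q,S)$. For an edge value $e$, the block of $e$ is the graph whose vertices are all points lying in some pair with value $e$ and whose edges are exactly the pairs with value $e$; it is complete if every two of its vertices form a pair with value $e$. *)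

(* A cograph on a point set [T] with edge values in [E] is represented by a
   function [C : T -> T -> E] that is symmetric on distinct points; its values
   on the diagonal [C P P] are irrelevant and never used. *)

Section Cographs.
Context {T E : Type}.

Definition is_cograph (C : T -> T -> E) : Prop :=
  forall P Q : T, P <> Q -> C P Q = C Q P.

Definition PL_1a (C : T -> T -> E) : Prop :=
  forall P Q R : T, P <> Q -> P <> R -> Q <> R ->
    C P Q = C Q R -> C P Q = C P R.

Definition PL_1b (C : T -> T -> E) : Prop :=
  forall P Q R S : T,
    P <> Q -> P <> R -> P <> S -> Q <> R -> Q <> S -> R <> S ->
    C P Q = C R S ->
    C P Q = C P R /\ C P Q = C P S /\ C P Q = C Q R /\ C P Q = C Q S.

Definition PL_cograph (C : T -> T -> E) : Prop := PL_1a C /\ PL_1b C.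

Definition same_value_closed (C : T -> T -> E) : Prop :=
  forall (e : E) (P Q R S : T),
    P <> Q -> R <> S ->
    ~ ((P = R /\ Q = S) \/ (P = S /\ Q = R)) ->
    C P Q = e -> C R S = e ->
    forall X Y : T,
      (X = P \/ X = Q \/ X = R \/ X = S) ->
      (Y = P \/ Y = Q \/ Y = R \/ Y = S) ->
      X <> Y -> C X Y = e.

(* Vertices of the block of e: points lying in some pair with value e.
   The edges of the block are exactly the pairs with value e. *)
Definition block_vertex (C : T -> T -> E) (e : E) (X : T) : Prop :=
  exists Y : T, X <> Y /\ C X Y = e.

Definition block_complete (C : T -> T -> E) (e : E) : Prop :=
  forall X Y : T, block_vertex C e X -> block_vertex C e Y -> X <> Y ->
    C X Y = e.

Definition all_blocks_complete (C : T -> T -> E) : Prop :=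
  forall e : E, block_complete C e.

(* Condition (4): blocks of distinct edge values share at most one vertex.
   (Blocks of distinct attained edge values have distinct edge sets, hence are
   distinct; a non-attained value has an empty block, so the condition is
   vacuous for it.) *)
Definition blocks_meet_at_most_once (C : T -> T -> E) : Prop :=
  forall (e f : E), e <> f ->
    forall X Y : T,
      block_vertex C e X -> block_vertex C f X ->
      block_vertex C e Y -> block_vertex C f Y ->
      X = Y.

End Cographs.

From Stdlib Require Import Classical.

(* Everything goes through condition (3).  Axioms (1a) and (1b) say exactly
   that two edges of a block spanning three, resp. four, points are joined by
   edges of the same block, which is completeness; condition (2) is the same
   statement for a single pair of edges.  For (4): if X and Y are distinct
   vertices of the block of e, they are also vertices of the block of
   C X Y, so the two blocks coincide, i.e. C X Y = e. *)

Section Blocks.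
Variables (T E : Type) (C : T -> T -> E).
Hypothesis C_sym : is_cograph C.

Lemma block_vertex_l (e : E) (X Y : T) : X <> Y -> C X Y = e -> block_vertex C e X.
Proof. intros; exists Y; auto. Qed.

Lemma block_vertex_r (e : E) (X Y : T) : X <> Y -> C X Y = e -> block_vertex C e Y.
Proof. intros nXY <-; exists X; split; auto. Qed.

Lemma PL_cograph_blocks_complete : PL_cograph C -> all_blocks_complete C.
Proof.
  intros [PL1a PL1b] e X Y [X' [nXX' <-]] [Y' [nYY' eYY']] nXY.
  destruct (classic (X' = Y)) as [-> | nX'Y]; [reflexivity |].
  destruct (classic (Y' = X)) as [-> | nY'X]; [rewrite C_sym; auto |].
  destruct (classic (X' = Y')) as [<- | nX'Y'].
  - symmetry; apply PL1a; auto.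
    rewrite <- eYY'; apply C_sym; auto.
  - symmetry; apply (PL1b X X' Y Y'); auto.
Qed.

Lemma blocks_complete_PL_cograph : all_blocks_complete C -> PL_cograph C.
Proof.
  intros complete; split.
  - intros P Q R nPQ nPR nQR eQR; symmetry; apply complete; auto.
    + now apply (block_vertex_l _ P Q).
    + now apply (block_vertex_r _ Q R).
  - intros P Q R S nPQ nPR nPS nQR nQS nRS eRS.
    pose proof (block_vertex_l _ P Q nPQ eq_refl).
    pose proof (block_vertex_r _ P Q nPQ eq_refl).
    pose proof (block_vertex_l _ R S nRS (eq_sym eRS)).
    pose proof (block_vertex_r _ R S nRS (eq_sym eRS)).
    repeat split; symmetry; apply complete; auto.
Qed.

Lemma blocks_complete_same_value_closed : all_blocks_complete C -> same_value_closed C.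
Proof.
  intros complete e P Q R S nPQ nRS _ ePQ eRS X Y HX HY nXY.
  apply complete; auto;
    [destruct HX as [-> | [-> | [-> | ->]]] | destruct HY as [-> | [-> | [-> | ->]]]];
    eauto using block_vertex_l, block_vertex_r.
Qed.

Lemma same_value_closed_blocks_complete : same_value_closed C -> all_blocks_complete C.
Proof.
  intros closed e X Y [X' [nXX' eXX']] [Y' [nYY' eYY']] nXY.
  destruct (classic ((X = Y /\ X' = Y') \/ (X = Y' /\ X' = Y)))
    as [[[eXY _] | [_ <-]] | distinct_pairs].
  - contradiction.
  - exact eXX'.
  - apply (closed e X X' Y Y'); auto.
Qed.

Lemma blocks_complete_meet_at_most_once :
  all_blocks_complete C -> blocks_meet_at_most_once C.
Proof.
  intros complete e f nef X Y eX fX eY fY.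
  apply NNPP; intro nXY.
  apply nef; rewrite <- (complete e X Y), <- (complete f X Y); auto.
Qed.

Lemma meet_at_most_once_blocks_complete :
  blocks_meet_at_most_once C -> all_blocks_complete C.
Proof.
  intros meet e X Y eX eY nXY.
  apply NNPP; intro ne.
  apply nXY, (meet e (C X Y)); eauto using block_vertex_l, block_vertex_r.
Qed.

End Blocks.

Theorem proposition5p1 (T E : Type) (C : T -> T -> E) :
  is_cograph C ->
  (PL_cograph C <-> same_value_closed C) /\
  (PL_cograph C <-> all_blocks_complete C) /\
  (PL_cograph C <-> blocks_meet_at_most_once C).
Proof.
  intros C_sym.
  pose proof (PL_cograph_blocks_complete T E C C_sym).
  pose proof (blocks_complete_PL_cograph T E C C_sym).
  pose proof (blocks_complete_same_value_closed T E C C_sym).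
  pose proof (same_value_closed_blocks_complete T E C).
  pose proof (blocks_complete_meet_at_most_once T E C).
  pose proof (meet_at_most_once_blocks_complete T E C C_sym).
  tauto.
Qed.
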